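(* Let $p$ be an odd prime and $r\in\{1,2,\ldots,(p-1)/2\}$. Then $$\sum_{k=0}^{\frac{p-1}2}\frac{\binom{2k}k^2}{32^k}k(k-1)\cdots(k-r+1)\equiv\begin{cases}0\pmod{p^2}&\text{if }4\mid(p+1-2r),\\ (-1)^{\frac{p-1+2r}4}2^{-\frac{p-1}2}\dfrac{(\frac{p-1}2+r)!}{(\frac{p-1-2r}4)!\,(\frac{p-1+2r}4)!}\pmod{p^2}&\text{if }4\mid(p-1-2r).\end{cases}$$
   Context: Congruences are between rational numbers whose denominators are prime to $p$. *)

From HB Require Import structures.
From mathcomp Require Import all_boot all_order all_algebra.
Set Implicit Arguments. Unset Strict Implicit. Unset Printing Implicit Defensive.
Import Order.TTheory GRing.Theory Num.Theory.
Local Open Scope ring_scope.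

(* For m = p^2 and a, b with denominators prime to p this is
   the usual congruence modulo p^2. *)
Definition rat_eqmod (m : nat) (a b : rat) : Prop :=
  coprime `|denq ((a - b) / m%:R)|%N m.

(* Write p = 2n+1.  For k <= n, both C(2k,k)^2/16^k and (-1)^k C(n,k) C(n+k,k)
   have the form P/(4^k k!^2): the first with P = prod_(j<k) (2j+1)^2, the second
   with P = prod_(j<k) ((2j+1)^2 - p^2).  Hence the two agree modulo p^2, and the
   sum is congruent to
     sum_k C(n,k) (n+k)^_(n+r) (-1/2)^k / n!  =  (-1/2)^r F^(n+r)(-1/2) / n!,
   where F = x^n (1+x)^n.  As F(x) = ((x+1/2)^2 - 1/4)^n, the derivative
   F^(n+r)(-1/2) is (n+r)! times the coefficient of y^(n+r) in (y^2 - 1/4)^n,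
   which vanishes when n+r is odd and is a single binomial term otherwise. *)

From HB Require Import structures.
From mathcomp Require Import all_boot all_order all_algebra.
From mathcomp Require Import ring zify.
Import Order.TTheory GRing.Theory Num.Theory.
Set Implicit Arguments. Unset Strict Implicit. Unset Printing Implicit Defensive.
Local Open Scope ring_scope.

Definition p_integral (p : nat) (x : rat) :=
  exists (z : int) (d : nat), coprime d p /\ x = z%:~R / d%:R.

Section PIntegral.

Variable p : nat.
Hypothesis p_gt1 : (1 < p)%N.

Lemma natr_coprime_neq0 d : coprime d p -> (d%:R : rat) != 0.
Proof.
case: d => [|d _]; last by rewrite pnatr_eq0.
by rewrite /coprime gcd0n => /eqP p1; move: p_gt1; rewrite p1.
Qed.

Lemma p_integral_den x : p_integral p x -> coprime `|denq x|%N p.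
Proof.
move=> [z [d [cop_dp ->]]]; apply: (coprime_dvdl _ cop_dp).
set y := (z%:~R / d%:R : rat).
have yd : y * d%:R = z%:~R by rewrite /y divfK ?natr_coprime_neq0.
have cross : numq y * d%:Z = z * denq y.
  by apply/eqP; rewrite -(eqr_int rat) !intrM -yd numqE mulrAC.
have : (`|denq y| %| `|numq y| * d)%N.
  by apply/dvdnP; exists `|z|%N; rewrite -[d]/(`|d%:Z|%N) -!abszM cross.
by rewrite Gauss_dvdr // coprime_sym coprime_num_den.
Qed.

Lemma p_integralD x y : p_integral p x -> p_integral p y -> p_integral p (x + y).
Proof.
move=> [z1 [d1 [c1 ->]]] [z2 [d2 [c2 ->]]].
exists (z1 * d2%:Z + z2 * d1%:Z), (d1 * d2)%N; split; first by rewrite coprimeMl c1.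
rewrite rmorphD !rmorphM /= !pmulrn.
by field; rewrite !natr_coprime_neq0.
Qed.

Lemma p_integralM x y : p_integral p x -> p_integral p y -> p_integral p (x * y).
Proof.
move=> [z1 [d1 [c1 ->]]] [z2 [d2 [c2 ->]]].
exists (z1 * z2), (d1 * d2)%N; split; first by rewrite coprimeMl c1.
by rewrite rmorphM natrM /= invfM mulrACA.
Qed.

Lemma p_integral_int (z : int) : p_integral p z%:~R.
Proof. by exists z, 1%N; rewrite divr1 coprime1n. Qed.

Lemma p_integralVn d : coprime d p -> p_integral p d%:R^-1.
Proof. by move=> cop_dp; exists 1, d; rewrite mul1r. Qed.

Lemma p_integral_sum n (F : 'I_n -> rat) :
  (forall i, p_integral p (F i)) -> p_integral p (\sum_(i < n) F i).
Proof.
move=> F_int; apply: (big_ind (p_integral p)) => //.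
- exact: (p_integral_int 0).
- exact: p_integralD.
Qed.

Lemma rat_eqmod_sqr a b : p_integral p ((a - b) / (p ^ 2)%:R) -> rat_eqmod (p ^ 2) a b.
Proof. by move=> /p_integral_den; apply: coprimeXr. Qed.

End PIntegral.

Definition odd_prod k := (\prod_(j < k) j.*2.+1)%N.

Lemma fact_double k : ((k.*2)`! = 2 ^ k * k`! * odd_prod k)%N.
Proof.
elim: k => [|k IH]; first by rewrite /odd_prod big_ord0.
rewrite doubleS !factS IH /odd_prod big_ord_recr /= expnS -addnn; ring.
Qed.

Lemma bin_double_fact k : ('C(k.*2, k) * k`! = 2 ^ k * odd_prod k)%N.
Proof.
apply/eqP; rewrite -(eqn_pmul2r (fact_gt0 k)) -mulnA.
have := bin_fact (leq_addr k k); rewrite addnK addnn fact_double => ->.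
by rewrite mulnAC.
Qed.

Lemma ffact_addn a b c : ((a + b) ^_ (a + c) = (a + b) ^_ a * b ^_ c)%N.
Proof.
elim: a => [|a IH]; first by rewrite !add0n ffactn0 mul1n.
by rewrite !addSn !ffactSS IH mulnA.
Qed.

Lemma ffact_fact_addn n k :
  (n ^_ k * (n + k)`! = n`! * \prod_(j < k) ((n - j) * (n + j).+1))%N.
Proof.
elim: k => [|k IH]; first by rewrite big_ord0 addn0 ffactn0 mul1n muln1.
rewrite ffactnSr big_ord_recr /= addnS factS [in RHS]mulnA -IH; ring.
Qed.

Lemma bin_ffact_shift n r k :
  ('C(n, k) * (n + k) ^_ (n + r) * k`! ^ 2
   = k ^_ r * n`! * \prod_(j < k) ((n - j) * (n + j).+1))%N.
Proof.
rewrite ffact_addn -[in RHS]mulnA -ffact_fact_addn -(bin_ffact n k).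
by rewrite -(ffact_fact (leq_addr k n)) addKn; ring.
Qed.

Definition odd_shift_prod (p k : nat) : int :=
  \prod_(j < k) (((j.*2.+1) ^ 2)%:Z - (p ^ 2)%:Z).

Lemma odd_prod_sqr_congr p k :
  ((p ^ 2)%:Z %| (odd_prod k)%:Z ^+ 2 - odd_shift_prod p k)%Z.
Proof.
elim: k => [|k IH]; first by rewrite /odd_prod /odd_shift_prod !big_ord0 subrr dvdz0.
rewrite /odd_prod /odd_shift_prod !big_ord_recr /= -/(odd_prod k) -/(odd_shift_prod p k).
set a := (odd_prod k)%:Z; set b := odd_shift_prod p k.
have -> : (odd_prod k * k.*2.+1)%N%:Z ^+ 2 - b * (((k.*2.+1) ^ 2)%:Z - (p ^ 2)%:Z)
    = ((k.*2.+1) ^ 2)%:Z * (a ^+ 2 - b) + b * (p ^ 2)%:Z.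
  by rewrite PoszM -/a -!natz !natrX; ring.
by rewrite rpredD ?dvdz_mull // dvdz_mulr.
Qed.

Lemma odd_shift_prod_half n k : (k <= n)%N ->
  odd_shift_prod (n.*2.+1) k = (- 4) ^+ k * (\prod_(j < k) ((n - j) * (n + j).+1))%N%:Z.
Proof.
elim: k => [|k IH] hk; first by rewrite /odd_shift_prod !big_ord0 expr0 mulr1.
rewrite /odd_shift_prod big_ord_recr /= -/(odd_shift_prod _ k) IH ?(ltnW hk) //.
rewrite big_ord_recr /= PoszM exprSr -!natz !natrX; lia.
Qed.

Lemma natr_fact_neq0 m : (m`!%:R : rat) != 0.
Proof. by rewrite pnatr_eq0 -lt0n fact_gt0. Qed.

Lemma central_binom_term_sub n r k : (k <= n)%N ->
  ('C(k.*2, k) ^ 2)%:R / 32%:R ^+ k * (k ^_ r)%:R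
  - ('C(n, k) * (n + k) ^_ (n + r))%:R * (- 2%:R^-1) ^+ k / n`!%:R
  = (k ^_ r)%:R * ((odd_prod k)%:Z ^+ 2 - odd_shift_prod (n.*2.+1) k)%:~R
    / (8 ^ k * k`! ^ 2)%:R :> rat.
Proof.
move=> le_kn; rewrite odd_shift_prod_half //.
have bin_double : 'C(k.*2, k)%:R = 2%:R ^+ k * (odd_prod k)%:R / k`!%:R :> rat.
  by rewrite -natrX -natrM -bin_double_fact natrM -mulrA divff ?mulr1 ?natr_fact_neq0.
have bin_shift : ('C(n, k) * (n + k) ^_ (n + r))%:R
    = (k ^_ r)%:R * n`!%:R * (\prod_(j < k) ((n - j) * (n + j).+1))%N%:R
      / k`!%:R ^+ 2 :> rat.
  rewrite -!natrM -natrX -bin_ffact_shift [in RHS]natrM -mulrA divff ?mulr1 //.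
  by rewrite natrX expf_neq0 ?natr_fact_neq0.
have intr_nat m : (m%:Z)%:~R = m%:R :> rat by [].
rewrite natrX bin_double bin_shift rmorphB /= !rmorphM /= !rmorphXn /= !intr_nat natrX.
have pow2 m : (2 ^ m)%:R ^+ k = (2%:R ^+ k) ^+ m :> rat.
  by rewrite -exprM mulnC exprM natrX.
rewrite -[32%:R]/((2 ^ 5)%:R) -[8%:R]/((2 ^ 3)%:R) !pow2.
rewrite -[- 2%:R^-1]mulN1r -[(-4)%:~R]mulN1r !exprMn -[4%:R]/((2 ^ 2)%:R) pow2.
rewrite [(2%:R^-1) ^+ k]exprVn.
set t := (2%:R : rat) ^+ k.
have t_neq0 : t != 0 by rewrite expf_neq0.
field; by rewrite t_neq0 !natr_fact_neq0.
Qed.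

Lemma coprime_fact p k : prime p -> (k < p)%N -> coprime k`! p.
Proof.
move=> p_pr; elim: k => [|k IH] lt_kp; first exact: coprime1n.
rewrite factS coprimeMl IH ?(ltnW lt_kp) // andbT coprime_sym prime_coprime //.
by apply/negP => /(dvdn_leq (ltn0Sn k)); rewrite leqNgt lt_kp.
Qed.

Lemma central_binom_term_congr n r k : prime (n.*2.+1) -> (k <= n)%N ->
  p_integral (n.*2.+1)
    ((('C(k.*2, k) ^ 2)%:R / 32%:R ^+ k * (k ^_ r)%:R
      - ('C(n, k) * (n + k) ^_ (n + r))%:R * (- 2%:R^-1) ^+ k / n`!%:R)
     / ((n.*2.+1) ^ 2)%:R).
Proof.
move=> p_pr le_kn; rewrite central_binom_term_sub //.
(* A variable p, not a [set] abbreviation, so that [p_neq0] can rewrite the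
   side condition produced by [field] below. *)
have [p def_p] : {p | p = n.*2.+1} by exists n.*2.+1.
rewrite -def_p in p_pr *.
have /dvdzP [z ->] := odd_prod_sqr_congr p k.
set D := (8 ^ k * k`! ^ 2)%N.
have D_cop : coprime D p.
  have two_cop : coprime 2 p by rewrite coprime2n def_p /= odd_double.
  have fact_cop : coprime k`! p by apply: coprime_fact; rewrite // def_p; lia.
  by rewrite coprimeMl !coprimeXl // -[8%N]/(2 ^ 3)%N coprimeXl.
have p_neq0 : (p%:R : rat) != 0 by rewrite pnatr_eq0 -lt0n prime_gt0.
have -> : (k ^_ r)%:R * (z * (p ^ 2)%:Z)%:~R / D%:R / (p ^ 2)%:R
          = ((k ^_ r)%:Z * z)%:~R * D%:R^-1 :> rat.
  rewrite !intrM natrX; field.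
  by rewrite p_neq0 (natr_coprime_neq0 (prime_gt1 p_pr) D_cop).
by apply: p_integralM; [apply: p_integral_int | apply: p_integralVn].
Qed.

Definition rodrigues_sum n r : rat :=
  \sum_(k < n.+1) ('C(n, k) * (n + k) ^_ (n + r))%:R * (- 2%:R^-1) ^+ k / n`!%:R.

Lemma central_binom_sum_eqmod n r : prime (n.*2.+1) ->
  rat_eqmod ((n.*2.+1) ^ 2)
    (\sum_(k < n.+1) ('C(k.*2, k) ^ 2)%:R / 32%:R ^+ k * (k ^_ r)%:R)
    (rodrigues_sum n r).
Proof.
move=> p_pr; apply: (rat_eqmod_sqr (prime_gt1 p_pr)).
rewrite /rodrigues_sum -sumrB mulr_suml.
apply: (p_integral_sum (prime_gt1 p_pr)) => k.
exact: central_binom_term_congr p_pr (ltn_ord k).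
Qed.

Lemma coef_CaddXn (R : comNzRingType) (c : R) n j :
  ((c%:P + 'X) ^+ n)`_j = c ^+ (n - j) *+ 'C(n, j).
Proof.
rewrite exprDn coef_sum.
under eq_bigr => i _ do rewrite coefMn -rmorphXn coefCM coefXn.
have [lt_jn1|le_n1j] := ltnP j n.+1; last first.
  rewrite bin_small // big1 // => i _.
  by rewrite (gtn_eqF (leq_trans (ltn_ord i) le_n1j)) mulr0 mul0rn.
rewrite (bigD1 (Ordinal lt_jn1)) //= eqxx mulr1 big1 ?addr0 // => i ne_ij.
have /negbTE-> : j != i by apply: contra ne_ij => /eqP ji; apply/eqP/val_inj.
by rewrite mulr0 mul0rn.
Qed.

Lemma derivn_comp_XaddC (R : comNzRingType) (q : {poly R}) c m :
  (q \Po ('X + c%:P))^`(m) = q^`(m) \Po ('X + c%:P).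
Proof.
elim: m => [|m IH]; first by rewrite !derivn0.
by rewrite !derivnS IH deriv_comp derivD derivX derivC addr0 mulr1.
Qed.

Definition rodrigues_poly n : {poly rat} := 'X^n * (1 + 'X) ^+ n.

Lemma coef_rodrigues_poly n i : (rodrigues_poly n)`_(n + i) = 'C(n, i)%:R.
Proof.
by rewrite coefXnM ltnNge leq_addr /= addKn -[1]polyC1 coef_CaddXn expr1n.
Qed.

Lemma rodrigues_poly_shift n :
  rodrigues_poly n = ((- 4%:R^-1)%:P + 'X ^+ 2) ^+ n \Po ('X + (2%:R^-1)%:P).
Proof.
rewrite /rodrigues_poly rmorphXn /= -exprMn; congr (_ ^+ _).
rewrite comp_polyD comp_polyC rmorphXn /= comp_polyX.
have quarter : (4%:R^-1 : rat) = 2%:R^-1 * 2%:R^-1 by rewrite -invfM -natrM.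
have one_halves : (1 : rat) = 2%:R^-1 + 2%:R^-1 by field.
by rewrite quarter -polyC1 one_halves polyCN polyCM polyCD; ring.
Qed.

Lemma coef_CaddX2n (R : comNzRingType) (c : R) n i :
  ((c%:P + 'X ^+ 2) ^+ n)`_i =
  if (2 %| i)%N then c ^+ (n - i %/ 2) *+ 'C(n, i %/ 2) else 0.
Proof.
have -> : (c%:P + 'X ^+ 2) ^+ n = (c%:P + 'X) ^+ n \Po 'X^2.
  by rewrite rmorphXn /= comp_polyD comp_polyC comp_polyX.
by rewrite coef_comp_poly_Xn // coef_CaddXn.
Qed.

Lemma rodrigues_sum_horner n r :
  \sum_(k < n.+1) ('C(n, k) * (n + k) ^_ (n + r))%:R * (- 2%:R^-1) ^+ k
  = (- 2%:R^-1) ^+ r * ((rodrigues_poly n)^`(n + r)).[- 2%:R^-1].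
Proof.
set x := - 2%:R^-1; set G := 'X^r * (rodrigues_poly n)^`(n + r).
have coefG i : G`_i = ('C(n, i) * (n + i) ^_ (n + r))%:R.
  rewrite coefXnM coef_derivn; case: ltnP => [lt_ir|le_ri].
    by rewrite ffact_small ?muln0 // ltn_add2l.
  by rewrite -addnA subnKC // coef_rodrigues_poly natrM mulr_natr.
set N := maxn (size G) n.+1.
rewrite -hornerXn -hornerM -/G (@horner_coef_wide _ N) ?leq_maxl //.
rewrite (big_ord_widen N (fun i => ('C(n, i) * (n + i) ^_ (n + r))%:R * x ^+ i)) ?leq_maxr //.
rewrite big_mkcond /=; apply: eq_bigr => i _; rewrite coefG.
by case: ltnP => // lt_ni; rewrite bin_small // mul0n mul0r.
Qed.

Lemma rodrigues_sum_closed n r : rodrigues_sum n r =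
  (- 2%:R^-1) ^+ r
  * (if (2 %| n + r)%N then (- 4%:R^-1) ^+ (n - (n + r) %/ 2) *+ 'C(n, (n + r) %/ 2)
     else 0)
  * (n + r)`!%:R / n`!%:R.
Proof.
rewrite /rodrigues_sum -mulr_suml rodrigues_sum_horner; congr (_ * _).
rewrite rodrigues_poly_shift derivn_comp_XaddC horner_comp !hornerE addNr.
rewrite horner_coef0 coef_derivn addn0 ffactnn coef_CaddX2n.
by rewrite -[RHS]mulrA [in RHS]mulr_natr.
Qed.

Lemma rodrigues_sum_odd n r : odd (n + r) -> rodrigues_sum n r = 0.
Proof.
by move=> odd_nr; rewrite rodrigues_sum_closed dvdn2 odd_nr mulr0 !mul0r.
Qed.

Lemma rodrigues_sum_even r m :
  rodrigues_sum (r + m + m) r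
  = (-1) ^+ (r + m) * 2%:R ^- (r + m + m) * (r + m + m + r)`!%:R
    / (m`! * (r + m)`!)%:R.
Proof.
have half_nr : ((r + m + m + r) %/ 2 = r + m)%N by lia.
rewrite rodrigues_sum_closed half_nr (_ : (2 %| _)%N = true); last by lia.
rewrite (_ : (r + m + m - (r + m) = m)%N); last by lia.
have bin_mid : 'C(r + m + m, r + m)%:R
    = (r + m + m)`!%:R / ((r + m)`!%:R * m`!%:R) :> rat.
  have := bin_fact (leq_addr m (r + m)); rewrite addKn => fact_eq.
  by rewrite -fact_eq !natrM mulfK ?mulf_neq0 ?natr_fact_neq0.
rewrite -[_ *+ 'C(_, _)]mulr_natr bin_mid natrM.
set u := (2%:R : rat); have u_neq0 : u != 0 by rewrite pnatr_eq0.
have -> : (- 4%:R^-1 : rat) = - (u^-1 * u^-1) by rewrite -invfM -natrM.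
rewrite -[- u^-1]mulN1r -[- (u^-1 * u^-1)]mulN1r !exprMn !exprD !exprVn.
field; by rewrite !natr_fact_neq0 !expf_neq0.
Qed.

Theorem theorem2p3 (p r : nat) :
  prime p -> odd p -> (1 <= r)%N -> (r <= (p - 1)./2)%N ->
  let S : rat := \sum_(k < (p - 1)./2.+1)
      ('C(k.*2, k) ^ 2)%:R / 32%:R ^+ k * (k ^_ r)%:R in
  ((4 %| p + 1 - r.*2)%N -> rat_eqmod (p ^ 2) S 0) /\
  ((4 %| p - 1 - r.*2)%N ->
     rat_eqmod (p ^ 2) S
       ((-1) ^+ ((p - 1 + r.*2) %/ 4) * 2%:R ^- ((p - 1)./2)
        * ((p - 1)./2 + r)`!%:R
        / (((p - 1 - r.*2) %/ 4)`! * ((p - 1 + r.*2) %/ 4)`!)%:R)).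
Proof.
move=> p_pr p_odd r_gt0 le_r_half S; rewrite {}/S.
set n := (p - 1)./2 in le_r_half *.
have def_p : p = n.*2.+1 by rewrite /n; lia.
clearbody n.
have := @central_binom_sum_eqmod n r; rewrite -def_p => /(_ p_pr) S_eqmod.
split=> [div4 | div4].
  have odd_nr : odd (n + r) by move: div4; rewrite def_p; lia.
  by rewrite rodrigues_sum_odd in S_eqmod.
have [m def_n] : exists m, n = (r + m + m)%N.
  by exists ((n - r)./2); move: div4; rewrite def_p; lia.
rewrite (_ : ((p - 1 + r.*2) %/ 4 = r + m)%N); last by rewrite def_p def_n; lia.
rewrite (_ : ((p - 1 - r.*2) %/ 4 = m)%N); last by rewrite def_p def_n; lia.
by move: S_eqmod; rewrite def_n rodrigues_sum_even.
Qed.
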